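(* Assume every tuple $t\in R_x$ has $w_{tj}>0$ for at least one $j$, so that all marginal gains $\mathbb{Q}(B\cup\{t\})-\mathbb{Q}(B)$ for $t\notin B$ are strictly positive, and assume $K\le N$. Define $$\kappa=1-\min_{t\in R_x}\ \min_{A,B\subseteq R_x\setminus\{t\}}\frac{\mathbb{Q}(A\cup\{t\})-\mathbb{Q}(A)}{\mathbb{Q}(B\cup\{t\})-\mathbb{Q}(B)}.$$ Let $O\subseteq R_x$ with $|O|\le K$ be an optimal deletion set, i.e. one maximizing $\mathbb{Q}$ among all sets of size at most $K$. Let $\Delta D$ be the output of the deletion-only greedy procedure, defined as follows. Start with $\Delta D_0=\emptyset$. For $i=0,\dots,K-1$, set $\Delta D_{i+1}=\Delta D_i\cup\{t\}$, where $t\in R_x\setminus \Delta D_i$ maximizes $\mathbb{Q}(\Delta D_i\cup\{t\})$. Finally $\Delta D=\Delta D_K$. Then $$\mathbb{Q}(\Delta D)\ \ge\ (1-\kappa)\,\mathbb{Q}(O).$$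
   Context: Setting: $R_x=\{t_1,\dots,t_N\}$ and $M$ queries, with joint weights $w_{ij}\in\mathbb{Z}_{\ge0}$ and $C_j=\sum_{i=1}^N w_{ij}$. The deletion-only total Qerror is $\mathbb{Q}(X)=\sum_{j=1}^M\frac{C_j+1}{C_j+1-\sum_{t_i\in X}w_{ij}}$ for $X\subseteq R_x$, where $X$ is the set of deleted tuples, and $K$ is the attack budget. *)

From HB Require Import structures.
From mathcomp Require Import all_boot all_order all_algebra.
Set Implicit Arguments. Unset Strict Implicit. Unset Printing Implicit Defensive.
Import Order.TTheory GRing.Theory Num.Theory.
Local Open Scope ring_scope.

(* Tuples t_1..t_N are indexed by 'I_N, queries by 'I_M; w i j = w_{ij}. *)

Definition Ctot (N M : nat) (w : 'I_N -> 'I_M -> nat) (j : 'I_M) : nat :=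
  (\sum_(i < N) w i j)%N.

(* Deletion-only total Qerror Q(X), X = set of deleted tuples. *)
Definition Qerr (R : realFieldType) (N M : nat) (w : 'I_N -> 'I_M -> nat)
  (X : {set 'I_N}) : R :=
  \sum_(j < M) ((Ctot w j).+1%:R /
                ((Ctot w j).+1%:R - (\sum_(i in X) w i j)%N%:R)).

Definition gain (R : realFieldType) (N M : nat) (w : 'I_N -> 'I_M -> nat)
  (t : 'I_N) (A : {set 'I_N}) : R :=
  Qerr R w (t |: A) - Qerr R w A.

(* min_t min_{A,B subset R_x \ {t}} gain t A / gain t B.  The fold uses
   default 1; since A = B gives ratio 1, this is the exact minimum whenever
   N >= 1. *)
Definition gammaQ (R : realFieldType) (N M : nat) (w : 'I_N -> 'I_M -> nat) : R :=
  \big[Num.min/1]_(t : 'I_N)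
    \big[Num.min/1]_(A : {set 'I_N} | t \notin A)
      \big[Num.min/1]_(B : {set 'I_N} | t \notin B)
        (gain R w t A / gain R w t B).

Definition kappaQ (R : realFieldType) (N M : nat) (w : 'I_N -> 'I_M -> nat) : R :=
  1 - gammaQ R w.

Definition greedy_run (R : realFieldType) (N M : nat) (w : 'I_N -> 'I_M -> nat)
  (K : nat) (D : nat -> {set 'I_N}) : Prop :=
  D 0%N = set0 /\
  forall i : nat, (i < K)%N ->
    exists t : 'I_N, [/\ t \notin D i, D i.+1 = t |: D i &
      forall t' : 'I_N, t' \notin D i ->
        Qerr R w (t' |: D i) <= Qerr R w (t |: D i)].

From HB Require Import structures.
From mathcomp Require Import all_boot all_order all_algebra.
Set Implicit Arguments. Unset Strict Implicit. Unset Printing Implicit Defensive.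
Import Order.TTheory GRing.Theory Num.Theory.
Local Open Scope ring_scope.

(* If every marginal gain of a set function F is at least g times any other
   marginal gain of the same element, then after i greedy steps
   g * F S <= F (D i) for every S with |S| <= i.  Inductively, either S lies
   inside the current greedy set, or some s in S is still available: splitting
   F S = F (S :\ s) + gain s (S :\ s), the first part is covered by induction
   and g * gain s (S :\ s) <= gain s (D i) <= gain t (D i) for the greedy
   choice t.  For Qerr the ratio g is exactly gammaQ = 1 - kappaQ. *)

Section GreedyRatioBound.

Variables (R : realFieldType) (T : finType) (F : {set T} -> R) (g : R).

Definition greedy_chain (K : nat) (D : nat -> {set T}) : Prop :=
  D 0%N = set0 /\
  forall i : nat, (i < K)%N ->
    exists t : T, [/\ t \notin D i, D i.+1 = t |: D i &
      forall t' : T, t' \notin D i -> F (t' |: D i) <= F (t |: D i)].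

Hypothesis F_set0_ge0 : 0 <= F set0.
Hypothesis g_le1 : g <= 1.
Hypothesis gain_ge0 : forall (t : T) (A : {set T}),
  t \notin A -> 0 <= F (t |: A) - F A.
Hypothesis gain_ratio : forall (t : T) (A B : {set T}),
  t \notin A -> t \notin B ->
  g * (F (t |: B) - F B) <= F (t |: A) - F A.

Variables (K : nat) (D : nat -> {set T}).
Hypothesis greedyD : greedy_chain K D.

Lemma greedy_chain_card i : (i <= K)%N -> #|D i| = i.
Proof.
case: greedyD => D0 Dstep; elim: i => [|i IHi] iK; first by rewrite D0 cards0.
have [t [tD -> _]] := Dstep i iK.
by rewrite cardsU1 tD IHi // ltnW.
Qed.

Lemma greedy_chain_ratio_bound i : (i <= K)%N ->
  forall S : {set T}, (#|S| <= i)%N -> g * F S <= F (D i).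
Proof.
case: greedyD => D0 Dstep; elim: i => [|i IHi] iK S.
  rewrite D0 leqn0 cards_eq0 => /eqP ->.
  by rewrite -[leRHS]mul1r ler_wpM2r.
move=> Si; have {}IHi := IHi (ltnW iK).
have [t [tD -> tmax]] := Dstep i iK.
have gain_split X x : F (x |: X) = F X + (F (x |: X) - F X).
  by rewrite addrC subrK.
rewrite gain_split; have [SD | /subsetPn[s sS sD]] := boolP (S \subset D i).
  rewrite -[leLHS]addr0 lerD ?gain_ge0 // IHi //.
  by rewrite -(greedy_chain_card (ltnW iK)) subset_leq_card.
have sS' : s \notin S :\ s by rewrite !inE eqxx.
rewrite -(setD1K sS) gain_split mulrDr lerD //.
  by rewrite IHi // -ltnS (leq_trans _ Si) // (cardsD1 s S) sS.
apply: le_trans (gain_ratio sD sS') _.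
by rewrite lerD2r tmax.
Qed.

End GreedyRatioBound.

Section QerrGains.

Variables (R : realFieldType) (N M : nat) (w : 'I_N -> 'I_M -> nat).

Lemma sum_weights_le_Ctot (X : {set 'I_N}) j :
  (\sum_(i in X) w i j <= Ctot w j)%N.
Proof. by rewrite /Ctot [leqRHS](bigID (mem X)) leq_addr. Qed.

Lemma ler_ratio_sub (c a b : nat) : (a <= b)%N -> (b < c)%N ->
  c%:R / (c%:R - a%:R) <= c%:R / (c%:R - b%:R) :> R.
Proof.
move=> ab bc.
have cb : 0 < c%:R - b%:R :> R by rewrite subr_gt0 ltr_nat.
have ca : 0 < c%:R - a%:R :> R by rewrite subr_gt0 ltr_nat (leq_ltn_trans ab).
rewrite ler_pM2l ?ltr0n ?(leq_ltn_trans _ bc) // lef_pV2 ?posrE //.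
by rewrite lerB // ler_nat.
Qed.

Lemma ltr_ratio_sub (c a b : nat) : (a < b)%N -> (b < c)%N ->
  c%:R / (c%:R - a%:R) < c%:R / (c%:R - b%:R) :> R.
Proof.
move=> ab bc.
have cb : 0 < c%:R - b%:R :> R by rewrite subr_gt0 ltr_nat.
have ca : 0 < c%:R - a%:R :> R by rewrite subr_gt0 ltr_nat (ltn_trans ab).
rewrite ltr_pM2l ?ltr0n ?(leq_ltn_trans _ bc) // ltf_pV2 ?posrE //.
by rewrite ltrD2l ltrN2 ltr_nat.
Qed.

Lemma Qerr_set0_ge0 : 0 <= Qerr R w set0.
Proof. by apply: sumr_ge0 => j _; rewrite big_set0 subr0 divr_ge0. Qed.

Lemma gain_gt0 t (A : {set 'I_N}) :
  (exists j, (0 < w t j)%N) -> t \notin A -> 0 < gain R w t A.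
Proof.
move=> [j0 wtj0] tA; rewrite subr_gt0 /Qerr.
rewrite (bigD1 j0) //= [ltRHS](bigD1 j0) //=.
have tA_lt j : (\sum_(i in t |: A) w i j < (Ctot w j).+1)%N.
  by rewrite ltnS sum_weights_le_Ctot.
apply: ltr_leD.
  by rewrite ltr_ratio_sub // big_setU1 //= -[X in (X < _)%N]add0n ltn_add2r.
apply: ler_sum => j _; rewrite ler_ratio_sub //.
by rewrite big_setU1 //= leq_addl.
Qed.

Lemma gammaQ_le1 : gammaQ R w <= 1.
Proof. exact: bigmin_le_id. Qed.

Lemma gammaQ_mul_gain_le t (A B : {set 'I_N}) :
  (exists j, (0 < w t j)%N) -> t \notin A -> t \notin B ->
  gammaQ R w * gain R w t B <= gain R w t A.
Proof.
move=> wt tA tB; rewrite -ler_pdivlMr ?gain_gt0 //.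
apply: (bigmin_inf t) => //; apply: (bigmin_inf A) => //.
exact: (bigmin_inf B).
Qed.

End QerrGains.

Theorem theorem4p3 (R : realFieldType) (N M K : nat)
  (w : 'I_N -> 'I_M -> nat)
  (hpos : forall t : 'I_N, exists j : 'I_M, (0 < w t j)%N)
  (hK : (K <= N)%N)
  (O : {set 'I_N}) (hOcard : (#|O| <= K)%N)
  (hOopt : forall X : {set 'I_N}, (#|X| <= K)%N -> Qerr R w X <= Qerr R w O)
  (D : nat -> {set 'I_N}) (hD : greedy_run R w K D) :
  Qerr R w (D K) >= (1 - kappaQ R w) * Qerr R w O.
Proof.
rewrite /kappaQ opprB addrC subrK.
have gain_ge0 t (A : {set 'I_N}) : t \notin A -> 0 <= gain R w t A.
  by move=> tA; rewrite ltW ?gain_gt0.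
have gain_ratio t (A B : {set 'I_N}) : t \notin A -> t \notin B ->
    gammaQ R w * gain R w t B <= gain R w t A.
  exact: gammaQ_mul_gain_le.
exact: (greedy_chain_ratio_bound (Qerr_set0_ge0 R w) (gammaQ_le1 R w)
          gain_ge0 gain_ratio hD (leqnn K) hOcard).
Qed.
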